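(* If a hypergraph $H$ is degenerate, then its suspension $S(H)$ is degenerate.
   Context: A hypergraph $H=(V,E)$ has finite vertex set $V$ and edge set $E\subseteq 2^V$; $R(H)=\{|F|:F\in E\}$. $H_1\subseteq H_2$ means there is an injective $f\colon V(H_1)\to V(H_2)$ with $f(F)\in E(H_2)$ for all $F\in E(H_1)$. For $G$ on $n$ vertices, $h_n(G)=\sum_{F\in E(G)}1/\binom{n}{|F|}$; $\pi_n(H)=\max\{h_n(G): G\text{ on } n \text{ vertices}, R(G)\subseteq R(H), H\not\subseteq G\}$ and $\pi(H)=\lim_n\pi_n(H)$. $H$ is degenerate if $\pi(H)=|R(H)|-1$. The suspension $S(H)$ has vertex set $V(H)\cup\{\ast\}$ for a new vertex $\ast$ and edge set $\{F\cup\{\ast\}: F\in E(H)\}$. *)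

From HB Require Import structures.
From mathcomp Require Import all_boot all_order all_algebra.
From mathcomp Require Import all_classical all_reals all_analysis.
Set Implicit Arguments. Unset Strict Implicit. Unset Printing Implicit Defensive.
Import Order.TTheory GRing.Theory Num.Theory.
Import numFieldNormedType.Exports.
Local Open Scope classical_set_scope.
Local Open Scope ring_scope.

Record hgraph := Hgraph { hv : nat; he : {set {set 'I_hv}} }.

Definition Rsizes (H : hgraph) : seq nat := undup [seq #|F| | F : {set 'I_(hv H)} in he H].

Definition contained (H : hgraph) (n : nat) (E : {set {set 'I_n}}) : Prop :=
  exists f : 'I_(hv H) -> 'I_n, injective f /\ forall F, F \in he H -> f @: F \in E.

Definition hn (R : realType) (n : nat) (E : {set {set 'I_n}}) : R :=
  \sum_(F in E) ('C(n, #|F|))%:R^-1.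

Definition admissible (H : hgraph) (n : nat) (E : {set {set 'I_n}}) : Prop :=
  (forall F, F \in E -> #|F| \in Rsizes H) /\ ~ contained H E.

(* pi_n(H): maximum of h_n over admissible G (0 if there is none; h_n >= 0). *)
Definition pin (R : realType) (H : hgraph) (n : nat) : R :=
  \big[Num.max/0]_(E : {set {set 'I_n}} | `[< admissible H E >]) hn R E.

Definition degenerate (R : realType) (H : hgraph) : Prop :=
  (fun n => pin R H n) @ \oo --> ((size (Rsizes H))%:R - 1 : R).

Definition suspension (H : hgraph) : hgraph :=
  @Hgraph (hv H).+1
    [set ord_max |: (widen_ord (leqnSn (hv H)) @: F) | F : {set 'I_(hv H)} in he H].

(* For the upper bound, take an admissible family E for S(H) on n+1 vertices and a
   vertex v.  The link of v (the edges through v, with v removed) is admissible for H, since a copy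
   of H in the link extends by v to a copy of S(H) in E; so h_n(link v) <= pi_n(H).  Every edge of E
   has size at least 1, and double counting over v gives
   sum_v h_n(link v) = (n+1) h_{n+1}(E), whence pi_{n+1}(S(H)) <= pi_n(H).
   For the lower bound, for any H on at most m vertices, taking all m-sets of sizes in R(H) except
   one shows pi_m(H) >= |R(H)| - 1.  As |R(S(H))| = |R(H)|, pi_{n+1}(S(H)) is squeezed between
   |R(H)| - 1 and pi_n(H), which tends to |R(H)| - 1. *)
From mathcomp Require Import all_boot all_order all_algebra.
From mathcomp Require Import all_classical all_reals all_analysis.
From mathcomp Require Import ring lra.
Import Order.TTheory GRing.Theory Num.Theory.
Import numFieldNormedType.Exports.
Set Implicit Arguments. Unset Strict Implicit. Unset Printing Implicit Defensive.
Local Open Scope ring_scope.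

Definition cone n (v : 'I_n.+1) (F : {set 'I_n}) : {set 'I_n.+1} := v |: (lift v @: F).

Lemma card_cone n (v : 'I_n.+1) F : #|cone v F| = #|F|.+1.
Proof.
rewrite cardsU1 card_imset; last exact: lift_inj.
suff -> : v \notin lift v @: F by [].
by apply/imsetP => -[j _ vE]; move: (neq_lift v j); rewrite -vE eqxx.
Qed.

Lemma coneK n (v : 'I_n.+1) F : lift v @^-1: cone v F = F.
Proof.
apply/setP => j; rewrite !inE eq_sym (negbTE (neq_lift v j)) /=.
by rewrite (mem_imset _ _ (@lift_inj _ v)).
Qed.

Lemma cone_inj n (v : 'I_n.+1) : injective (cone v).
Proof. by move=> A B eqAB; rewrite -(coneK v A) eqAB coneK. Qed.

Lemma lift_ord_max n : lift ord_max =1 widen_ord (leqnSn n).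
Proof. by move=> i; apply: val_inj; apply: lift_max. Qed.

Lemma suspensionE (H : hgraph) : he (suspension H) = cone ord_max @: he H.
Proof. by apply: eq_imset => F; rewrite /cone (eq_imset _ (@lift_ord_max _)). Qed.

Lemma Rsizes_suspension (H : hgraph) : Rsizes (suspension H) =i map succn (Rsizes H).
Proof.
move=> k; rewrite /Rsizes mem_undup suspensionE; apply/idP/mapP.
  case/fintype.imageP => _ /imsetP[F HF ->] ->; rewrite card_cone.
  by exists #|F|; rewrite // mem_undup; apply/fintype.imageP; exists F.
case=> j + ->; rewrite mem_undup => /fintype.imageP[F HF ->].
by apply/fintype.imageP; exists (cone ord_max F); rewrite ?card_cone ?imset_f.
Qed.

Lemma size_Rsizes_suspension (H : hgraph) :
  size (Rsizes (suspension H)) = size (Rsizes H).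
Proof.
rewrite -(size_map succn (Rsizes H)); apply/perm_size/uniq_perm.
- exact: undup_uniq.
- by rewrite (map_inj_uniq succn_inj) undup_uniq.
- exact: Rsizes_suspension.
Qed.

Lemma Rsizes_leq (H : hgraph) k : k \in Rsizes H -> (k <= hv H)%N.
Proof.
rewrite /Rsizes mem_undup => /fintype.imageP[F _ ->].
by apply: leq_trans (max_card F) _; rewrite card_ord.
Qed.

Lemma RsizesP (H : hgraph) k : k \in Rsizes H -> exists2 F, F \in he H & #|F| = k.
Proof. by rewrite /Rsizes mem_undup => /fintype.imageP[F HF ->]; exists F. Qed.

Definition link n (v : 'I_n.+1) (E : {set {set 'I_n.+1}}) : {set {set 'I_n}} :=
  [set F | cone v F \in E].

Lemma cone_preimset n (v : 'I_n.+1) (F : {set 'I_n.+1}) :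
  v \in F -> cone v (lift v @^-1: F) = F.
Proof.
move=> vF; apply/setP => u; rewrite /cone !inE.
case: (unliftP v u) => [j ->|->]; last by rewrite eqxx vF.
by rewrite eq_sym (negbTE (neq_lift v j)) (mem_imset _ _ (@lift_inj _ v)) inE.
Qed.

Lemma cone_link n (v : 'I_n.+1) E : cone v @: link v E = [set F in E | v \in F].
Proof.
apply/setP => F; rewrite !inE; apply/imsetP/andP.
  by case=> G; rewrite inE => HG ->; rewrite /cone setU11.
by case=> HF vF; exists (lift v @^-1: F); rewrite ?inE cone_preimset.
Qed.

Lemma hn_link (R : realType) n (v : 'I_n.+1) E :
  hn R (link v E) = \sum_(F in E | v \in F) ('C(n, #|F|.-1))%:R^-1.
Proof.
rewrite (eq_bigl [in [set F in E | v \in F]]); last by move=> F; rewrite !inE.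
rewrite -cone_link big_imset /=; last by move=> A B _ _; apply: cone_inj.
by apply: eq_bigr => F _; rewrite card_cone.
Qed.

Lemma natr_div_bin_pred (R : numFieldType) n k : (0 < k <= n.+1)%N ->
  k%:R / ('C(n, k.-1))%:R = n.+1%:R / ('C(n.+1, k))%:R :> R.
Proof.
case: k => // k /= le_k_n.
have [Cn_neq0 CSn_neq0] : ('C(n, k))%:R != 0 :> R /\ ('C(n.+1, k.+1))%:R != 0 :> R.
  by rewrite !pnatr_eq0 -!lt0n !bin_gt0.
by apply/eqP; rewrite eqr_div // -!natrM mulnC (mul_bin_diag n.+1 k) mulnC.
Qed.

(* Each edge F of E is counted once in the link of each of its #|F| vertices. *)
Lemma sum_hn_link (R : realType) n (E : {set {set 'I_n.+1}}) :
  (forall F, F \in E -> 0 < #|F|)%N ->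
  \sum_(v : 'I_n.+1) hn R (link v E) = n.+1%:R * hn R E.
Proof.
move=> E_gt0; under eq_bigr do rewrite hn_link.
rewrite (exchange_big_dep [in E]) /=; last by move=> ? ? _ /andP[].
rewrite /hn mulr_sumr; apply: eq_bigr => F EF.
rewrite (eq_bigl [in F]); last by move=> v; rewrite EF.
rewrite sumr_const -(mulr_natl _ #|F|) natr_div_bin_pred // E_gt0 //=.
by apply: leq_trans (max_card F) _; rewrite card_ord.
Qed.

Definition extend_ord k n (v : 'I_n.+1) (f : 'I_k -> 'I_n) (i : 'I_k.+1) : 'I_n.+1 :=
  if unlift ord_max i is Some j then lift v (f j) else v.

Lemma extend_ord_lift k n v (f : 'I_k -> 'I_n) j :
  extend_ord v f (lift ord_max j) = lift v (f j).
Proof. by rewrite /extend_ord liftK. Qed.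

Lemma extend_ord_max k n v (f : 'I_k -> 'I_n) : extend_ord v f ord_max = v.
Proof. by rewrite /extend_ord unlift_none. Qed.

Lemma extend_ord_inj k n v (f : 'I_k -> 'I_n) : injective f -> injective (extend_ord v f).
Proof.
move=> f_inj i1 i2.
case: (unliftP ord_max i1) => [j1|] ->; case: (unliftP ord_max i2) => [j2|] ->;
  rewrite ?extend_ord_lift ?extend_ord_max //.
- by move/lift_inj/f_inj ->.
- by move/eqP; rewrite eq_sym (negbTE (neq_lift _ _)).
- by move/eqP; rewrite (negbTE (neq_lift _ _)).
Qed.

Lemma extend_ord_cone k n v (f : 'I_k -> 'I_n) F :
  extend_ord v f @: cone ord_max F = cone v (f @: F).
Proof.
rewrite /cone imsetU1 extend_ord_max -!imset_comp.
by congr (_ |: _); apply: eq_imset => j /=; rewrite extend_ord_lift.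
Qed.

Lemma contained_suspension_link (H : hgraph) n (v : 'I_n.+1) E :
  contained H (link v E) -> contained (suspension H) E.
Proof.
case=> f [f_inj fE]; exists (extend_ord v f); split; first exact: extend_ord_inj.
rewrite suspensionE => _ /imsetP[F HF ->].
by rewrite extend_ord_cone; have := fE F HF; rewrite inE.
Qed.

Lemma admissible_link (H : hgraph) n (v : 'I_n.+1) E :
  admissible (suspension H) E -> admissible H (link v E).
Proof.
case=> E_sizes E_free; split; last by move/contained_suspension_link.
move=> F; rewrite inE => /E_sizes.
by rewrite Rsizes_suspension card_cone (mem_map succn_inj).
Qed.

Lemma hn_ge0 (R : realType) n (E : {set {set 'I_n}}) : 0 <= hn R E.
Proof. by apply: sumr_ge0 => F _; rewrite invr_ge0 ler0n. Qed.

Lemma pin_ge0 (R : realType) H n : 0 <= pin R H n.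
Proof.
rewrite /pin; elim/big_ind: _ => // [x y x_ge0 y_ge0|E _].
  by rewrite le_max x_ge0.
exact: hn_ge0.
Qed.

Lemma hn_le_pin (R : realType) H n (E : {set {set 'I_n}}) :
  admissible H E -> hn R E <= pin R H n.
Proof. by move=> HE; apply: le_bigmax_cond; apply/asboolP. Qed.

Lemma pin_suspension_le (R : realType) H n :
  pin R (suspension H) n.+1 <= pin R H n.
Proof.
apply: bigmax_le; first exact: pin_ge0.
move=> E /asboolP HE.
have E_gt0 F : F \in E -> (0 < #|F|)%N.
  by move/(proj1 HE); rewrite Rsizes_suspension => /mapP[k _ ->].
rewrite -(@ler_pM2l _ n.+1%:R) ?ltr0n // -sum_hn_link //.
apply: (@le_trans _ _ (\sum_(v < n.+1) pin R H n)).
  by apply: ler_sum => v _; apply/hn_le_pin/admissible_link.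
by rewrite sumr_const card_ord mulr_natl.
Qed.

Lemma hn_level (R : realType) m k : (k <= m)%N ->
  hn R [set F : {set 'I_m} | #|F| == k] = 1.
Proof.
move=> le_km; rewrite /hn (eq_bigr (fun=> ('C(m, k))%:R^-1)) => [|F]; last first.
  by rewrite inE => /eqP ->.
rewrite sumr_const card_draws card_ord -(mulr_natr (('C(m, k))%:R^-1 : R)) mulVf //.
by rewrite pnatr_eq0 -lt0n bin_gt0.
Qed.

Lemma hn_card_in (R : realType) m (s : seq nat) : uniq s -> {in s, forall k, k <= m}%N ->
  hn R [set F : {set 'I_m} | #|F| \in s] = (size s)%:R.
Proof.
elim: s => [_ _|k s IHs /= /andP[k_notin_s s_uniq] le_s_m].
  by rewrite /hn big_pred0 // => F; rewrite inE.
rewrite /hn (eq_bigl [predU [set F : {set 'I_m} | #|F| == k]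
                         & [set F : {set 'I_m} | #|F| \in s]]) => [|F]; last first.
  by rewrite !inE.
rewrite bigU; last first.
  by apply/pred0P => F; rewrite /= !inE; case: eqP => // ->; rewrite (negbTE k_notin_s).
change (hn R [set F : {set 'I_m} | #|F| == k] + hn R [set F : {set 'I_m} | #|F| \in s]
        = (size s).+1%:R).
rewrite hn_level ?le_s_m ?mem_head // IHs // => [|j js]; first by rewrite -nat1r.
by rewrite le_s_m // inE js orbT.
Qed.

(* Drop one size k from R(H): an edge of H of size k has nowhere to go. *)
Lemma pin_ge_size_Rsizes (R : realType) H m : (hv H <= m)%N ->
  (size (Rsizes H))%:R - 1 <= pin R H m.
Proof.
move=> le_H_m; have := undup_uniq [seq #|F| | F : {set 'I_(hv H)} in he H].
rewrite -/(Rsizes H); case def_sizes: (Rsizes H) => [|k s] /=.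
  by have := pin_ge0 R H m; lra.
case/andP=> k_notin_s s_uniq.
have sizes_le_m j : j \in s -> (j <= m)%N.
  by move=> js; apply: leq_trans le_H_m; apply: Rsizes_leq; rewrite def_sizes inE js orbT.
rewrite -nat1r addrC addKr -(hn_card_in R s_uniq sizes_le_m).
apply: hn_le_pin; split => [F|[f [f_inj fE]]].
  by rewrite inE def_sizes inE => ->; rewrite orbT.
have [F HF card_F] : exists2 F, F \in he H & #|F| = k.
  by apply: RsizesP; rewrite def_sizes mem_head.
by have := fE F HF; rewrite inE card_imset // card_F (negbTE k_notin_s).
Qed.

Theorem mainTheorem18 (R : realType) (H : hgraph) :
  degenerate R H -> degenerate R (suspension H).
Proof.
rewrite /degenerate size_Rsizes_suspension => piH_cvg.
rewrite -cvg_shiftS.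
apply: (squeeze_cvgr _ (cvg_cst ((size (Rsizes H))%:R - 1 : R)) piH_cvg).
near=> n; rewrite /= pin_suspension_le andbT -size_Rsizes_suspension.
by apply: pin_ge_size_Rsizes; near: n; exists (hv H).
Unshelve. all: by end_near.
Qed.
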